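(* Let $N\ge 1$ be an integer and $a\neq 0$ a complex constant. Let $\big(z_1(\ell),\dots,z_N(\ell)\big)$, $\ell=0,1,2,\dots$, be a sequence of $N$-tuples of complex numbers evolving according to the following discrete-time rule: for every $\ell\ge 0$, the numbers $z_1(\ell+2),\dots,z_N(\ell+2)$ are (in some order, counted with multiplicity) the $N$ roots in $z$ of $$\prod_{j=1}^{N}\frac{z-a^{2}z_j(\ell)}{z-a\,z_j(\ell+1)}=1+a,$$ i.e. of the degree-$N$ polynomial equation $\prod_{j=1}^N\big(z-a^2z_j(\ell)\big)-(1+a)\prod_{j=1}^N\big(z-a z_j(\ell+1)\big)=0$. Define $$v_m(0)=\frac{\prod_{j=1}^{N}\big(z_j(1)-a\,z_m(0)\big)}{\prod_{j=1,\,j\neq m}^{N}\big[a\,\big(z_j(0)-z_m(0)\big)\big]},\qquad m=1,\dots,N,$$ and the $N\times N$ matrix $$U_{nm}(\ell)=\delta_{nm}\,z_n(0)\,a^{\ell}+v_m(0)\,\frac{a^{\ell}-1}{a-1},\qquad n,m=1,\dots,N,$$ where $\frac{a^\ell-1}{a-1}$ is interpreted as $\ell$ when $a=1$. Then for every $\ell\ge0$ the multiset $\{z_1(\ell),\dots,z_N(\ell)\}$ coincides with the multiset of eigenvalues of $U(\ell)$. Equivalently, for every $\ell\ge1$ with $a\neq1$ and $a^\ell\neq1$, the numbers $z_n(\ell)$ are the $N$ solutions $z$ of $$\prod_{k=1}^{N}\frac{z-a^{\ell-1}z_k(1)}{z-a^{\ell}z_k(0)}=\frac{a^{\ell-1}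-1}{a^{\ell}-1}.$$
   Context: $\delta_{nm}$ is the Kronecker delta. Throughout, the data are assumed generic: for every $\ell$ the numbers $z_1(\ell),\dots,z_N(\ell)$ are pairwise distinct and all denominators appearing in the formulas above are nonzero. *)

From HB Require Import structures.
From mathcomp Require Import all_boot all_order all_algebra.
From mathcomp Require Import reals complex.
Set Implicit Arguments. Unset Strict Implicit. Unset Printing Implicit Defensive.
Import Order.TTheory GRing.Theory Num.Theory.
Local Open Scope ring_scope.

(* (a^l - 1)/(a - 1), interpreted as l when a = 1: the geometric sum. *)
Definition qint {C : ringType} (a : C) (l : nat) : C := \sum_(i < l) a ^+ i.

Definition is_root_multiset {C : fieldType} (p : {poly C}) (s : seq C) : Prop :=
  p != 0 /\ p = lead_coef p *: \prod_(x <- s) ('X - x%:P).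

Definition evol_poly {C : fieldType} (N : nat) (a : C) (z : nat -> 'I_N -> C)
  (l : nat) : {poly C} :=
  \prod_(j < N) ('X - (a ^+ 2 * z l j)%:P)
  - (1 + a)%:P * \prod_(j < N) ('X - (a * z l.+1 j)%:P).

Definition v0 {C : fieldType} (N : nat) (a : C) (z : nat -> 'I_N -> C)
  (m : 'I_N) : C :=
  (\prod_(j < N) (z 1%N j - a * z 0%N m))
  / (\prod_(j < N | j != m) (a * (z 0%N j - z 0%N m))).

Definition Umat {C : fieldType} (N : nat) (a : C) (z : nat -> 'I_N -> C)
  (l : nat) : 'M[C]_N :=
  \matrix_(n < N, m < N)
    ((n == m)%:R * z 0%N n * a ^+ l + v0 a z m * qint a l).

From HB Require Import structures.
From mathcomp Require Import all_boot all_order all_algebra.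
From mathcomp Require Import reals complex.
From mathcomp Require Import ring.
Import Order.TTheory GRing.Theory Num.Theory.
Local Open Scope ring_scope.

(* Put T(c, q) := prod_i (X - c x_i) - q sum_m v_m prod_(j != m) (X - c x_j)
   with x = z(0) and v = v(0).  By the matrix determinant lemma T(a^l, [l]) is
   the characteristic polynomial of U(l), so it suffices to show that
   Q_l := prod_n (X - z_n(l)) equals T(a^l, [l]).  For l = 0 this is clear;
   for l = 1 both sides are monic of degree N and agree at the N distinct
   points a z_k(0), which is what the definition of v(0) is made for.  Since
   b^N T(c, q)(X / b) = T(b c, b q) and T is affine in q, the rule
   -a Q_(l+2) = a^(2N) Q_l(X / a^2) - (1 + a) a^N Q_(l+1)(X / a) propagates
   the identity from l, l + 1 to l + 2, using (1 + a) a [l+1] - a^2 [l] = a [l+2]. *)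

Set Implicit Arguments. Unset Strict Implicit. Unset Printing Implicit Defensive.

Lemma det_diag_add_rank1 (R : idomainType) n (d : 'rV[R]_n) (p : 'cV[R]_n)
    (w : 'rV[R]_n) :
  \prod_i d 0 i != 0 ->
  \det (diag_mx d + p *m w) =
    \prod_i d 0 i + \sum_m w 0 m * p m 0 * \prod_(j | j != m) d 0 j.
Proof.
move=> dP_neq0; set P := \prod_i d 0 i.
set D := diag_mx d; set B := diag_mx (\row_i \prod_(j | j != i) d 0 j).
have DB : D *m B = P%:M.
  apply/matrixP=> i j; rewrite mul_diag_mx !mxE.
  case: eqVneq => [->|_]; last by rewrite !mulr0n mulr0.
  by rewrite !mulr1n /P [RHS](bigD1 j).
(* det M is computed twice: eliminating its first block column gives
   det (D + p w), while M *m F is block triangular because D *m B = P. *)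
set M : 'M[R]_(1 + n) := block_mx 1%:M w (- p) D.
have detM : \det M = \det (D + p *m w).
  have -> : M = block_mx 1%:M 0 (- p) 1%:M *m block_mx 1%:M w 0 (D + p *m w).
    by rewrite mulmx_block !mul1mx !mul0mx !addr0 !mulmx1 mulNmx addrC addrK.
  by rewrite det_mulmx det_lblock det_ublock !det1 !mul1r.
set F : 'M[R]_(1 + n) := block_mx P%:M 0 (B *m p) 1%:M.
have MF : M *m F = block_mx (P%:M + w *m B *m p) w 0 D.
  rewrite mulmx_block !mul1mx !mulmx0 !mulmx1 !add0r !mulmxA DB.
  by rewrite mul_scalar_mx mul_mx_scalar scalerN addNr.
move/(congr1 determinant): MF.
rewrite det_mulmx det_lblock det_ublock det1 mulr1 det_scalar1 det_mx11 detM.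
rewrite det_diag -/P => /(mulIf dP_neq0) ->.
rewrite !mxE eqxx mulr1n; congr (_ + _); apply: eq_bigr => m _.
by rewrite mul_mx_diag !mxE mulrAC.
Qed.

Section PolyFacts.
Variable C : fieldType.

Lemma size_prod_XsubC_pred (I : finType) (P : pred I) (w : I -> C) :
  size (\prod_(i | P i) ('X - (w i)%:P)) = #|P|.+1.
Proof. by rewrite -big_enum size_prod_XsubC cardE. Qed.

Lemma coef_prod_XsubC_ge (I : finType) (P : pred I) (w : I -> C) j :
  (#|P| <= j)%N -> (\prod_(i | P i) ('X - (w i)%:P))`_j = (j == #|P|)%:R.
Proof.
move=> Pj; case: eqVneq => [->|ne].
  by rewrite -(lead_coef_prod_XsubC (index_enum I) P w) lead_coefE size_prod_XsubC_pred.
by rewrite nth_default // size_prod_XsubC_pred ltn_neqAle eq_sym ne.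
Qed.

Lemma comp_prod_XsubC_scale (I : finType) (P : pred I) (w : I -> C) (b : C) :
  b != 0 ->
  (\prod_(i | P i) ('X - (w i)%:P)) \Po (b^-1 *: 'X)
  = b^-1 ^+ #|P| *: \prod_(i | P i) ('X - (b * w i)%:P).
Proof.
move=> b_neq0; rewrite rmorph_prod /= -scaler_prodl; apply: eq_bigr => i _.
rewrite comp_polyB comp_polyX comp_polyC scalerBr -!mul_polyC -polyCM.
by rewrite mulrA mulVf // mul1r.
Qed.

Lemma size_sub_prod_XsubC N (w w' : 'I_N -> C) :
  (size (\prod_i ('X - (w i)%:P) - \prod_i ('X - (w' i)%:P))%R <= N)%N.
Proof.
apply/leq_sizeP => j Nj.
by rewrite coefB !coef_prod_XsubC_ge ?cardT ?size_enum_ord // subrr.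
Qed.

End PolyFacts.

Section RankOneCharPoly.
Variables (C : fieldType) (N : nat) (x v : 'I_N -> C).

Definition rank1_charpoly (c q : C) : {poly C} :=
  \prod_i ('X - (c * x i)%:P)
  - q%:P * \sum_m (v m)%:P * \prod_(j | j != m) ('X - (c * x j)%:P).

Lemma char_poly_diag_add_rank1 (c q : C) :
  char_poly (\matrix_(n < N, m < N) ((n == m)%:R * x n * c + v m * q))
  = rank1_charpoly c q.
Proof.
rewrite /char_poly.
have -> : char_poly_mx (\matrix_(n, m) ((n == m)%:R * x n * c + v m * q)) =
    diag_mx (\row_i ('X - (c * x i)%:P)) +
    const_mx 1 *m \row_m (- (v m * q)%:P).
  apply/matrixP=> i j; rewrite !mxE big_ord1 !mxE mul1r.
  case: eqVneq => [->|_]; rewrite ?mulr1n ?mulr0n ?mul1r ?mul0r ?add0r //.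
  by rewrite polyCD polyCM; ring.
rewrite det_diag_add_rank1; last by apply/prodf_neq0 => i _; rewrite !mxE polyXsubC_eq0.
rewrite /rank1_charpoly mulr_sumr -sumrN.
under eq_bigr do rewrite mxE.
congr (_ + _); apply: eq_bigr => m _.
rewrite !mxE mulr1 polyCM; under eq_bigr do rewrite mxE; ring.
Qed.

Lemma rank1_charpoly_comp_scale (c q b : C) : b != 0 -> (0 < N)%N ->
  rank1_charpoly c q \Po (b^-1 *: 'X) = b^-1 ^+ N *: rank1_charpoly (b * c) (b * q).
Proof.
move=> b_neq0 N_gt0; set e := b^-1.
have eN : e ^+ N = e ^+ N.-1 * e by rewrite -exprSr prednK.
rewrite /rank1_charpoly comp_polyB comp_polyM comp_polyC raddf_sum /=.
rewrite comp_prod_XsubC_scale // cardT size_enum_ord scalerBr.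
under eq_bigr do rewrite mulrA.
congr (_ - _).
under eq_bigr do rewrite comp_polyM comp_polyC comp_prod_XsubC_scale //
  cardC1 card_ord -scalerAr.
rewrite -scaler_sumr -scalerAr eN -scalerA; congr (_ *: _).
rewrite scalerAl -mul_polyC -!polyCM mulrA mulVf // mul1r; congr (_ * _).
by apply: eq_bigr => m _; under eq_bigr do rewrite mulrA.
Qed.

Lemma rank1_charpoly_node (c q : C) k :
  (rank1_charpoly c q).[c * x k] =
    - q * v k * \prod_(j | j != k) (c * x k - c * x j).
Proof.
have root_k (P : pred 'I_N) : P k ->
    (\prod_(j | P j) ('X - (c * x j)%:P)).[c * x k] = 0.
  by move=> Pk; rewrite horner_prod (bigD1 k) //= hornerXsubC subrr mul0r.
rewrite /rank1_charpoly hornerD hornerN hornerCM root_k // sub0r horner_sum.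
rewrite (bigD1 k) //= [X in _ + X]big1 => [|m mk]; last first.
  by rewrite hornerCM root_k ?mulr0 1?eq_sym.
rewrite addr0 hornerCM horner_prod mulrA.
by under eq_bigr do rewrite hornerXsubC; rewrite !mulNr.
Qed.

Lemma size_rank1_charpoly_sub (c q : C) :
  (size (\prod_i ('X - (c * x i)%:P) - rank1_charpoly c q)%R <= N)%N.
Proof.
rewrite /rank1_charpoly opprB addrC subrK mul_polyC.
apply: leq_trans (size_scale_leq _ _) _; apply: leq_trans (size_sum _ _ _) _.
apply/bigmax_leqP => m _; rewrite mul_polyC.
apply: leq_trans (size_scale_leq _ _) _.
by rewrite size_prod_XsubC_pred cardC1 card_ord prednK // (leq_ltn_trans _ (ltn_ord m)).
Qed.

Lemma prod_XsubC_eq_rank1_charpoly (w : 'I_N -> C) (c q : C) :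
  c != 0 -> injective x ->
  (forall k, (\prod_i ('X - (w i)%:P)).[c * x k] =
     - q * v k * \prod_(j | j != k) (c * x k - c * x j)) ->
  \prod_i ('X - (w i)%:P) = rank1_charpoly c q.
Proof.
move=> c_neq0 x_inj w_nodes; apply/eqP; rewrite -subr_eq0; apply/eqP.
apply: (@roots_geq_poly_eq0 _ _ [seq c * x k | k : 'I_N]).
- apply/allP => _ /mapP[k _ ->].
  by rewrite /root hornerD hornerN w_nodes rank1_charpoly_node subrr.
- by rewrite map_inj_uniq ?enum_uniq // => j k /(mulfI c_neq0)/x_inj.
rewrite size_map size_enum_ord.
set Pw := \prod_i _; set Px := \prod_i ('X - (c * x i)%:P).
rewrite -(subrK Px Pw) -addrA; apply: leq_trans (size_polyD _ _) _.
by rewrite geq_max size_sub_prod_XsubC size_rank1_charpoly_sub.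
Qed.

Lemma prod_XsubC_scale_rank1 (w : 'I_N -> C) (c q b : C) :
  b != 0 -> (0 < N)%N ->
  \prod_i ('X - (w i)%:P) = rank1_charpoly c q ->
  \prod_i ('X - (b * w i)%:P) = rank1_charpoly (b * c) (b * q).
Proof.
move=> b_neq0 N_gt0 /(congr1 (comp_poly (b^-1 *: 'X))).
rewrite comp_prod_XsubC_scale // rank1_charpoly_comp_scale // cardT size_enum_ord.
by apply: scalerI; rewrite expf_neq0 // invr_eq0.
Qed.

End RankOneCharPoly.

Lemma qintS (C : ringType) (a : C) l : qint a l.+1 = 1 + a * qint a l.
Proof.
rewrite /qint big_ord_recl expr0 mulr_sumr; congr (_ + _).
by apply: eq_bigr => i _; rewrite exprS.
Qed.

Section Evolution.
Variables (C : fieldType) (N : nat) (a : C) (z : nat -> 'I_N -> C).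
Hypotheses (N_gt0 : (0 < N)%N) (a_neq0 : a != 0) (z0_inj : injective (z 0)).
Hypothesis evol :
  forall l, is_root_multiset (evol_poly a z l) [seq z l.+2 j | j : 'I_N].

Lemma evol_poly_eq l :
  is_root_multiset (evol_poly a z l) [seq z l.+2 j | j : 'I_N] ->
  evol_poly a z l = - a *: \prod_i ('X - (z l.+2 i)%:P).
Proof.
rewrite /is_root_multiset big_map big_enum /= => -[_ evolE].
rewrite {1}evolE; congr (_ *: _).
have coefN (w : 'I_N -> C) : (\prod_i ('X - (w i)%:P))`_N = 1.
  by rewrite coef_prod_XsubC_ge cardT size_enum_ord ?eqxx.
have := congr1 (fun p : {poly C} => p`_N) evolE.
rewrite coefZ coefN mulr1 => <-.
by rewrite /evol_poly coefB coefCM !coefN; ring.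
Qed.

Lemma prod_XsubC_z1 :
  \prod_i ('X - (z 1 i)%:P) = rank1_charpoly (z 0) (v0 a z) a 1.
Proof.
apply: prod_XsubC_eq_rank1_charpoly => // k.
rewrite horner_prod; under eq_bigr do rewrite hornerXsubC.
set D := \prod_(j | j != k) (a * (z 0 j - z 0 k)).
have D_neq0 : D != 0.
  apply/prodf_neq0 => j jk; rewrite mulf_neq0 // subr_eq0.
  by apply: contra jk => /eqP/z0_inj ->.
rewrite (eq_bigr (fun j => - (z 1 j - a * z 0 k))) => [|j _]; last by rewrite opprB.
rewrite (eq_bigr (fun j => - (a * (z 0 j - z 0 k))) (P := fun j => j != k));
  last by move=> j _; rewrite mulrBr opprB.
rewrite !prodrN -/D cardT size_enum_ord cardC1 card_ord /v0 -/D.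
have sgnN : (-1) ^+ N = - (-1) ^+ N.-1 :> C.
  by case: (N) N_gt0 => // n _; rewrite exprS mulN1r.
by rewrite sgnN; field.
Qed.

Lemma prod_XsubC_evol_step l :
  \prod_i ('X - (z l i)%:P) = rank1_charpoly (z 0) (v0 a z) (a ^+ l) (qint a l) ->
  \prod_i ('X - (z l.+1 i)%:P) =
    rank1_charpoly (z 0) (v0 a z) (a ^+ l.+1) (qint a l.+1) ->
  \prod_i ('X - (z l.+2 i)%:P) =
    rank1_charpoly (z 0) (v0 a z) (a ^+ l.+2) (qint a l.+2).
Proof.
move=> /(prod_XsubC_scale_rank1 (expf_neq0 2 a_neq0) N_gt0) Ql.
move=> /(prod_XsubC_scale_rank1 a_neq0 N_gt0) Ql1.
have := evol_poly_eq (evol l); rewrite /evol_poly Ql Ql1 -exprD -exprS => evolE.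
apply: (@scalerI _ _ (- a)); first by rewrite oppr_eq0.
rewrite -evolE /rank1_charpoly !qintS.
rewrite -mul_polyC !(polyCD, polyCM, polyCN, polyC1, rmorphXn); ring.
Qed.

Lemma prod_XsubC_z l :
  \prod_i ('X - (z l i)%:P) = rank1_charpoly (z 0) (v0 a z) (a ^+ l) (qint a l).
Proof.
suff [] : \prod_i ('X - (z l i)%:P) =
            rank1_charpoly (z 0) (v0 a z) (a ^+ l) (qint a l) /\
          \prod_i ('X - (z l.+1 i)%:P) =
            rank1_charpoly (z 0) (v0 a z) (a ^+ l.+1) (qint a l.+1) by [].
elim: l => [|l [Ql Ql1]]; last by split; last exact: prod_XsubC_evol_step.
split; last by rewrite prod_XsubC_z1 expr1 /qint big_ord1 expr0.
rewrite /rank1_charpoly /qint big_ord0 mul0r subr0.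
by under [RHS]eq_bigr do rewrite expr0 mul1r.
Qed.

End Evolution.

Theorem proposition2p1p1 (R : realType) (N : nat) (a : R[i])
  (z : nat -> 'I_N -> R[i]) :
  (0 < N)%N ->
  a != 0 ->
  (forall l (j k : 'I_N), j != k -> z l j != z l k) ->
  (* needed only for the rational form of the rule, not the polynomial one *)
  (forall l (j k : 'I_N), z l.+2 k != a * z l.+1 j) ->
  (forall l, is_root_multiset (evol_poly a z l) [seq z l.+2 j | j : 'I_N]) ->
  forall l : nat,
    char_poly (Umat a z l) = \prod_(n < N) ('X - (z l n)%:P).
Proof.
move=> N_gt0 a_neq0 z_distinct _ evol l.
have z0_inj : injective (z 0) by move=> j k; apply: contra_eq (z_distinct 0%N j k).
by rewrite [LHS]char_poly_diag_add_rank1 (prod_XsubC_z N_gt0 a_neq0 z0_inj evol l).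
Qed.
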